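(* For every $n\ge 2$, there exists no matching mechanism that is resolute, symmetric (i.e. $G^*$-symmetric) and minimally optimal.
   Context: Fix $n\ge 2$, $W=\{1,\dots,n\}$ (women), $M=\{n+1,\dots,2n\}$ (men), $I=W\cup M$. Permutations compose right-to-left. A preference profile is a function $p$ on $I$ assigning to each $x\in W$ a linear order $p(x)$ on $M$ and to each $y\in M$ a linear order $p(y)$ on $W$; $\mathcal{P}$ is the set of preference profiles. For a linear order $R$ on a set $X$ and $a\in X$, $\mathrm{Rank}_R(a)=|\{b\in X: b\succeq_R a\}|$. A matching is a permutation $\mu$ of $I$ with $\mu(W)=M$, $\mu(M)=W$ and $\mu(\mu(z))=z$ for all $z\in I$; $\mathcal{M}$ is the set of matchings. $\mu$ is minimally optimal for $p$ if there is $z\in I$ with $\mathrm{Rank}_{p(z)}(\mu(z))<n$. Let $G^*=\{\varphi\in\mathrm{Sym}(I):\{\varphi(W),\varphi(M)\}=\{W,M\}\}$. For a linear order $R$ on $X\subseteq I$ and $\varphi\in\mathrm{Sym}(I)$, $\varphi R$ is the relation on $\varphi(X)$ with $(a,b)\in\varphi R$ iff $(\varphi^{-1}(a),\varphi^{-1}(b))\in R$. For $p\in\mathcal{P}$, $\varphi\in G^*$, $p^\varphi(z)=\varphi\,p(\varphi^{-1}(z))$. For a permutation $\mu$, $\mu^\varphi=\varphi\mu\varphi^{-1}$; $S^\varphi=\{\mu^\varphi:\mu\in S\}$. A matching mechanism is a correspondence $F$ from $\mathcal{P}$ to $\mathcal{M}$; it is resolute if $|F(p)|=1$ for all $p$;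 minimally optimal if every $\mu\in F(p)$ is minimally optimal for $p$, for all $p$; symmetric if $F(p^\varphi)=F(p)^\varphi$ for all $p\in\mathcal{P}$, $\varphi\in G^*$. *)

From mathcomp Require Import all_boot all_fingroup.
Set Implicit Arguments. Unset Strict Implicit. Unset Printing Implicit Defensive.

(* Agents: I = 'I_(n+n). Ordinal i (0-based) encodes agent i+1.
   Women W = {i | i < n} (agents 1..n), men M = {i | n <= i} (agents n+1..2n). *)
Section Matching.
Variable n : nat.

Definition agent := 'I_(n + n).

Definition isW (i : agent) : bool := i < n.
Definition Wset : {set agent} := [set i | isW i].
Definition Mset : {set agent} := [set i | ~~ isW i].

Definition other_side (x : agent) : {set agent} := if isW x then Mset else Wset.

(* A prefrel on agents; R (a, b) means a ⪰ b (a weakly preferred to b). *)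
Definition prefrel := {ffun agent * agent -> bool}.

Definition linear_order (X : {set agent}) (R : prefrel) : Prop :=
  [/\ forall a b, R (a, b) -> a \in X /\ b \in X,
      forall a, a \in X -> R (a, a),
      forall a b, R (a, b) -> R (b, a) -> a = b,
      forall a b c, R (a, b) -> R (b, c) -> R (a, c) &
      forall a b, a \in X -> b \in X -> R (a, b) \/ R (b, a)].

Definition profile := {ffun agent -> prefrel}.

Definition is_profile (p : profile) : Prop :=
  forall x, linear_order (other_side x) (p x).

Definition rank (X : {set agent}) (R : prefrel) (a : agent) : nat :=
  #|[set b in X | R (b, a)]|.

Definition is_matching (mu : {perm agent}) : Prop :=
  [/\ mu @: Wset = Mset, mu @: Mset = Wset & forall z, mu (mu z) = z].

Definition minimally_optimal_matching (p : profile) (mu : {perm agent}) : Prop :=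
  exists z : agent, rank (other_side z) (p z) (mu z) < n.

Definition in_Gstar (phi : {perm agent}) : Prop :=
  [set phi @: Wset; phi @: Mset] = [set Wset; Mset].

Definition act_rel (phi : {perm agent}) (R : prefrel) : prefrel :=
  [ffun ab : agent * agent => R ((phi^-1)%g ab.1, (phi^-1)%g ab.2)].

Definition act_profile (phi : {perm agent}) (p : profile) : profile :=
  [ffun z => act_rel phi (p ((phi^-1)%g z))].

(* mu^phi = phi o mu o phi^-1 (right-to-left composition).  In MathComp,
   (s * t) x = t (s x), so phi o mu o phi^-1 is phi^-1 * mu * phi. *)
Definition act_matching (phi mu : {perm agent}) : {perm agent} :=
  (phi^-1 * mu * phi)%g.

Definition mechanism (F : profile -> {set {perm agent}}) : Prop :=
  forall p, is_profile p -> forall mu, mu \in F p -> is_matching mu.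

Definition resolute (F : profile -> {set {perm agent}}) : Prop :=
  forall p, is_profile p -> #|F p| = 1.

Definition minimally_optimal (F : profile -> {set {perm agent}}) : Prop :=
  forall p, is_profile p -> forall mu, mu \in F p -> minimally_optimal_matching p mu.

Definition Gsymmetric (F : profile -> {set {perm agent}}) : Prop :=
  forall p phi, is_profile p -> in_Gstar phi ->
    F (act_profile phi p) = [set act_matching phi mu | mu in F p].

End Matching.

From mathcomp Require Import all_boot all_fingroup.
From mathcomp Require Import zify.
Set Implicit Arguments. Unset Strict Implicit. Unset Printing Implicit Defensive.

(* Seat the 2n agents around a round table, women and men alternating, and let
   everybody rank the other side by clockwise distance from the person sitting
   directly opposite, who is thus ranked last.  Rotating the table by one seat
   exchanges W and M and fixes this profile, so by symmetry the unique matching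
   chosen for it commutes with the rotation.  A matching commuting with a full
   2n-cycle is a power of it, and an involution without fixed points among its
   powers is the half turn: everybody gets the person opposite, i.e. their last
   choice, and the matching is not minimally optimal. *)

Section Rotation.
Variables (N : nat) (P : {perm 'I_N}).
Local Open Scope group_scope.

Definition rotation : {perm 'I_N} := (P * perm (@ordS_inj N) * P^-1).

Definition rotation_steps (x y : 'I_N) : nat := (P y + (N - P x)) %% N.

Local Notation rot := rotation.
Local Notation steps := rotation_steps.

Lemma pos_rotation x : val (P (rot x)) = (P x).+1 %% N.
Proof. by rewrite !permM permKV permE. Qed.

Lemma pos_rotation_exp k x : val (P ((rot ^+ k) x)) = (P x + k) %% N.
Proof.
elim: k => [|k IHk]; first by rewrite expg0 perm1 addn0 modn_small.
by rewrite expgSr permM pos_rotation IHk -addn1 modnDml addn1 addnS.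
Qed.

Lemma rotation_exp_eq j k x : ((rot ^+ j) x == (rot ^+ k) x) = (j == k %[mod N]).
Proof. by rewrite -(inj_eq (@perm_inj _ P)) -val_eqE /= !pos_rotation_exp eqn_modDl. Qed.

Lemma rotation_steps_lt x y : steps x y < N.
Proof. by rewrite ltn_pmod // (leq_ltn_trans _ (ltn_ord x)). Qed.

Lemma rotation_stepsK x y : (rot ^+ steps x y) x = y.
Proof.
apply: (@perm_inj _ P); apply: val_inj; rewrite /= pos_rotation_exp modnDmr.
have -> : P x + (P y + (N - P x)) = P y + N by have := ltn_ord (P x); lia.
by rewrite modnDr modn_small.
Qed.

Lemma rotation_steps_exp k x : k < N -> steps x ((rot ^+ k) x) = k.
Proof.
move=> ltkN; have /eqP := rotation_stepsK x ((rot ^+ k) x).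
by rewrite rotation_exp_eq !modn_small ?rotation_steps_lt // => /eqP.
Qed.

Lemma rotation_steps_id x : steps x x = 0.
Proof. by rewrite /rotation_steps subnKC ?modnn // ltnW. Qed.

Lemma rotation_steps_inj x : injective (steps x).
Proof. by move=> a b eq_ab; rewrite -(rotation_stepsK x a) eq_ab rotation_stepsK. Qed.

Lemma rotation_expC k x : rot ((rot ^+ k) x) = (rot ^+ k) (rot x).
Proof. by rewrite -!permM -expgSr -expgS. Qed.

Lemma rotation_steps_rot x y : steps (rot x) (rot y) = steps x y.
Proof.
rewrite -{1}(rotation_stepsK x y) rotation_expC.
by rewrite rotation_steps_exp ?rotation_steps_lt.
Qed.

Lemma commute_rotation_exp (mu : {perm 'I_N}) x :
  commute mu rot -> mu = rot ^+ steps x (mu x).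
Proof.
move=> mu_rot; apply/permP => z; rewrite -(rotation_stepsK x z).
set d := steps x z; set e := steps x (mu x).
rewrite -permM -(commuteX d mu_rot) permM -{1}(rotation_stepsK x (mu x)) -/e.
by rewrite -!permM -!expgD addnC.
Qed.

Lemma involution_commute_rotation (mu : {perm 'I_N}) x :
  commute mu rot -> (forall z, mu (mu z) = z) -> mu x != x ->
  (steps x (mu x)).*2 = N.
Proof.
move=> mu_rot mu_inv mux_x; set e := steps x (mu x).
have e_gt0 : 0 < e.
  rewrite lt0n; apply: contraNneq mux_x => e0.
  by rewrite -(rotation_stepsK x (mu x)) -/e e0 expg0 perm1.
have e_lt : e < N := rotation_steps_lt x (mu x).
have /eqP : e + e == 0 %[mod N].
  rewrite -(rotation_exp_eq _ _ x) expgD permM -(commute_rotation_exp x mu_rot).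
  by rewrite mu_inv expg0 perm1.
rewrite mod0n -addnn => ee0; have := divn_eq (e + e) N.
by rewrite ee0 addn0; case: ((e + e) %/ N) => [|[|q]]; lia.
Qed.

End Rotation.

Lemma symmetric_resolute_commute n (F : profile n -> {set {perm agent n}})
    p phi mu :
  resolute F -> Gsymmetric F -> is_profile p -> in_Gstar phi ->
  act_profile phi p = p -> mu \in F p -> commute mu phi.
Proof.
move=> resF symF p_ok phiG p_phi mu_p.
have /cards1P [nu Fp] : #|F p| == 1 by rewrite resF.
move: mu_p (symF p phi p_ok phiG); rewrite p_phi Fp imset_set1 => /set1P -> /set1_inj.
by rewrite /act_matching /commute => {2}->; rewrite mulgA mulKVg.
Qed.

Section RoundTable.
Variable n : nat.

Lemma in_other_side (z a : agent n) : (a \in other_side z) = (isW a != isW z).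
Proof. by rewrite /other_side; case: (isW z); rewrite !inE; case: (isW a). Qed.

Lemma matching_other_side (mu : {perm agent n}) z :
  is_matching mu -> mu z \in other_side z.
Proof.
case=> [muW muM _]; rewrite /other_side; case: ifP => zW.
  by rewrite -muW imset_f ?inE.
by rewrite -muM imset_f ?inE ?zW.
Qed.

Definition seat_index (z : agent n) : nat :=
  if isW z then (z : nat).*2 else (z - n).*2.+1.

Lemma seat_index_lt z : seat_index z < n + n.
Proof. by rewrite /seat_index /isW -!muln2; have := ltn_ord z; case: ifP; lia. Qed.

Lemma odd_seat_index z : odd (seat_index z) = ~~ isW z.
Proof. by rewrite /seat_index; case: ifP; rewrite /= odd_double. Qed.

Lemma seat_index_inj : injective seat_index.
Proof.
move=> x y eq_xy; have eqW : isW x = isW y.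
  by apply: negb_inj; rewrite -!odd_seat_index eq_xy.
apply: ord_inj; move: eq_xy eqW; rewrite /seat_index /isW -!muln2.
by case: ltnP => hx; case: ltnP => hy //; lia.
Qed.

Definition seat_ord (z : agent n) : 'I_(n + n) := Ordinal (seat_index_lt z).

Lemma seat_ord_inj : injective seat_ord.
Proof. by move=> x y /(congr1 val) /seat_index_inj. Qed.

Definition seat : {perm agent n} := perm seat_ord_inj.

Lemma odd_seat z : odd (seat z) = ~~ isW z.
Proof. by rewrite permE odd_seat_index. Qed.

Definition neighbour : {perm agent n} := rotation seat.

Lemma isW_neighbour z : isW (neighbour z) = ~~ isW z.
Proof.
have even_nn : odd (n + n) = false by rewrite addnn odd_double.
by rewrite -[isW _]negbK -odd_seat pos_rotation (odd_mod _ even_nn) /= negbK odd_seat.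
Qed.

Lemma neighbour_imset_W : neighbour @: Wset n = Mset n.
Proof.
apply/setP => y; rewrite -[y](permKV neighbour) mem_imset; last exact: perm_inj.
by rewrite !inE (isW_neighbour (neighbour^-1%g y)) negbK.
Qed.

Lemma neighbour_imset_M : neighbour @: Mset n = Wset n.
Proof.
apply/setP => y; rewrite -[y](permKV neighbour) mem_imset; last exact: perm_inj.
by rewrite !inE (isW_neighbour (neighbour^-1%g y)).
Qed.

Lemma neighbour_Gstar : in_Gstar neighbour.
Proof. by rewrite /in_Gstar neighbour_imset_W neighbour_imset_M setUC. Qed.

Lemma card_other_side (z : agent n) : #|other_side z| = n.
Proof.
have cardWM : #|Wset n| = #|Mset n|.
  by rewrite -neighbour_imset_W card_imset //; exact: perm_inj.
have : #|Wset n| + #|~: Wset n| = n + n by rewrite cardsC card_ord.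
have -> : ~: Wset n = Mset n by apply/setP => i; rewrite !inE.
by rewrite /other_side; case: ifP; lia.
Qed.

Definition opposite (z : agent n) : agent n := (neighbour ^+ n)%g z.

Local Notation steps := (rotation_steps seat).

Definition round_table : profile n :=
  [ffun z => [ffun ab : agent n * agent n =>
    [&& ab.1 \in other_side z, ab.2 \in other_side z &
        steps (opposite z) ab.2 <= steps (opposite z) ab.1]]].

Lemma round_table_profile : is_profile round_table.
Proof.
move=> z; split.
- by move=> a b; rewrite !ffunE => /and3P [].
- by move=> a za; rewrite !ffunE /= za leqnn.
- move=> a b; rewrite !ffunE /= => /and3P [_ _ le_ba] /and3P [_ _ le_ab].
  by apply: (@rotation_steps_inj _ seat (opposite z)); apply/eqP; rewrite eqn_leq le_ab.
- move=> a b c; rewrite !ffunE /= => /and3P [-> _ le_ba] /and3P [_ -> le_cb].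
  by rewrite (leq_trans le_cb le_ba).
- by move=> a b za zb; rewrite !ffunE /= za zb /=; apply/orP/leq_total.
Qed.

Lemma opposite_neighbour z : opposite (neighbour z) = neighbour (opposite z).
Proof. by rewrite /opposite rotation_expC. Qed.

Lemma round_table_neighbour z a b :
  round_table (neighbour z) (neighbour a, neighbour b) = round_table z (a, b).
Proof.
rewrite !ffunE /= !in_other_side !isW_neighbour opposite_neighbour.
by rewrite !rotation_steps_rot; case: (isW a); case: (isW b); case: (isW z).
Qed.

Lemma act_round_table : act_profile neighbour round_table = round_table.
Proof.
apply/ffunP => z; apply/ffunP => -[a b]; rewrite 2![in LHS]ffunE /=.
by rewrite -(round_table_neighbour (neighbour^-1%g z)) !permKV.
Qed.

Lemma rank_opposite (z : agent n) :
  opposite z \in other_side z -> rank (other_side z) (round_table z) (opposite z) = n.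
Proof.
move=> z_opp; rewrite /rank -[RHS](card_other_side z); apply: eq_card => b.
by rewrite !inE !ffunE /= z_opp rotation_steps_id andbT andbb.
Qed.

Lemma matching_commute_neighbour (mu : {perm agent n}) z :
  is_matching mu -> commute mu neighbour -> mu z = opposite z.
Proof.
move=> mu_match mu_nb; have [_ _ mu_inv] := mu_match.
rewrite {1}(commute_rotation_exp z mu_nb) /opposite.
suff -> : steps z (mu z) = n by [].
apply: double_inj; rewrite (involution_commute_rotation mu_nb mu_inv) ?addnn //.
apply: contraTneq (matching_other_side z mu_match) => ->.
by rewrite in_other_side eqxx.
Qed.

End RoundTable.

Theorem theorem5 (n : nat) (hn : 2 <= n) :
  ~ exists F : profile n -> {set {perm agent n}},
      [/\ mechanism F, resolute F, Gsymmetric F & minimally_optimal F].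
Proof.
move=> [F [mechF resF symF moF]].
have p_ok := @round_table_profile n.
have /cards1P [mu Fp] : #|F (round_table n)| == 1 by rewrite resF.
have mu_p : mu \in F (round_table n) by rewrite Fp set11.
have mu_match := mechF _ p_ok _ mu_p.
have mu_nb := symmetric_resolute_commute resF symF p_ok (@neighbour_Gstar n)
  (@act_round_table n) mu_p.
have [z] := moF _ p_ok _ mu_p.
rewrite (matching_commute_neighbour z mu_match mu_nb) rank_opposite ?ltnn //.
by rewrite -(matching_commute_neighbour z mu_match mu_nb) matching_other_side.
Qed.
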